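(* Let $\{\mathbb{G}_n,\ n=2,3,\ldots\}$ be a sequence of random graphs as described in the context, with $\lim_{n\to\infty}|V_n|=\infty$ (no homogeneity assumption). For each $n$, let $(\nu_n,\mu_n)$ be a random pair uniformly distributed over $\Sigma_n=\{(k,\ell)\in V_n\times V_n: k\ne\ell\}$, i.e. $\mathbb{P}[\nu_n=k,\mu_n=\ell]=\frac{1}{|V_n|(|V_n|-1)}$ for distinct $k,\ell\in V_n$, and independent of $\mathbb{G}_n$. Fix $d\in\{0,1,\ldots\}$. Then $P_n(d)\to L(d)$ in probability for some scalar $L(d)\in\mathbb{R}$ if and only if $$\lim_{n\to\infty}\mathbb{P}[D_{n,\nu_n}=d]=L(d)\quad\text{and}\quad\lim_{n\to\infty}\mathrm{Cov}\big[\mathbf{1}[D_{n,\nu_n}=d],\mathbf{1}[D_{n,\mu_n}=d]\big]=0.$$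
   Context: All random variables are defined on a common probability space $(\Omega,\mathcal{F},\mathbb{P})$. For each $n=2,3,\ldots$, $\mathbb{G}_n$ is a random (possibly directed, self-loops allowed) graph on a deterministic finite node set $V_n$ with $|V_n|\ge 2$, determined by $\{0,1\}$-valued edge random variables $\{\chi_n(k,\ell),\ k,\ell\in V_n\}$ ($\chi_n(k,\ell)=1$ iff there is an edge from $k$ to $\ell$). The degree of node $k$ is $D_{n,k}=\sum_{\ell\in V_n}\chi_n(k,\ell)$. For $d=0,1,\ldots$, $N_n(d)=\sum_{k\in V_n}\mathbf{1}[D_{n,k}=d]$ and $P_n(d)=N_n(d)/|V_n|$. *)

From HB Require Import structures.
From mathcomp Require Import all_boot all_order all_algebra.
From mathcomp Require Import all_classical all_reals all_analysis.
Set Implicit Arguments. Unset Strict Implicit. Unset Printing Implicit Defensive.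
Import Order.TTheory GRing.Theory Num.Theory.
Local Open Scope classical_set_scope.
Local Open Scope ring_scope.

(* Random graph on node set V : finType, given by edge indicators
   chi : Omega -> V -> V -> bool (chi w k l = edge from k to l). *)

Definition degree {Omega : Type} {V : finType} (chi : Omega -> V -> V -> bool)
  (w : Omega) (k : V) : nat := (\sum_(l : V) chi w k l)%N.

Definition Ncount {Omega : Type} {V : finType} (chi : Omega -> V -> V -> bool)
  (d : nat) (w : Omega) : nat := #|[set k : V | degree chi w k == d]|.

Definition Pfrac {R : realType} {Omega : Type} {V : finType}
  (chi : Omega -> V -> V -> bool) (d : nat) (w : Omega) : R :=
  (Ncount chi d w)%:R / #|V|%:R.

(* Independence of the random element (nu,mu) from the random graph chi,
   both taking finitely many values: product rule on all atoms. *)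
Definition indep_pair_graph {dO : measure_display} {Omega : measurableType dO}
  {R : realType} (P : probability Omega R) {V : finType}
  (chi : Omega -> V -> V -> bool) (nu mu : Omega -> V) : Prop :=
  forall (g : V -> V -> bool) (k l : V),
    P ([set w | chi w = g] `&` [set w | nu w = k /\ mu w = l]) =
    (P [set w | chi w = g] * P [set w | nu w = k /\ mu w = l])%E.

Definition cvg_in_prob {dO : measure_display} {Omega : measurableType dO}
  {R : realType} (P : probability Omega R) (X : nat -> Omega -> R) (c : R) : Prop :=
  forall eps : R, 0 < eps ->
    (fun n => P [set w | eps < `|X n w - c| ]) @ \oo --> 0%E.

From HB Require Import structures.
From mathcomp Require Import all_boot all_order all_algebra.
From mathcomp Require Import all_classical all_reals all_analysis.
From mathcomp Require Import ring lra.
Import Order.TTheory GRing.Theory Num.Theory numFieldNormedType.Exports.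
Local Open Scope classical_set_scope.
Local Open Scope ring_scope.

(* Condition on the graph.  Given G_n, the pair (nu_n, mu_n) is a uniform
   sample of two distinct nodes, so P[D_nu = d | G_n] = P_n(d) and
   P[D_nu = d, D_mu = d | G_n] = N_n(d) (N_n(d) - 1) / (|V_n| (|V_n| - 1)),
   which is within 1 / (|V_n| - 1) of P_n(d)^2.  Hence P[D_nu = d] = E P_n(d)
   and the covariance is Var P_n(d) + O(1 / |V_n|).  Since 0 <= P_n(d) <= 1,
   P_n(d) -> L in probability iff E (P_n(d) - L)^2 -> 0 (Markov's inequality
   one way, boundedness the other), and E (P_n(d) - L)^2 is the sum of
   Var P_n(d) and (E P_n(d) - L)^2. *)

(* Moments under a finite probability vector q; below, q is the law of the
   random graph, so these are expectations of functions of the graph. *)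
Section FiniteMoments.
Context {R : realType} {G : finType} (q : G -> R).

Definition fmean (x : G -> R) : R := \sum_g q g * x g.
Definition fvar (x : G -> R) : R := fmean (fun g => x g ^+ 2) - fmean x ^+ 2.
Definition ftail (x : G -> R) (L eps : R) : R :=
  fmean (fun g => ((eps < `|x g - L|)%R)%:R).

Hypothesis q_ge0 : forall g, 0 <= q g.
Hypothesis q_sum1 : \sum_g q g = 1.

Lemma fmeanD x y : fmean (fun g => x g + y g) = fmean x + fmean y.
Proof. by rewrite -big_split; apply: eq_bigr => g _; rewrite mulrDr. Qed.

Lemma fmeanZ c x : fmean (fun g => c * x g) = c * fmean x.
Proof. by rewrite mulr_sumr; apply: eq_bigr => g _; rewrite mulrCA. Qed.

Lemma fmean_cst c : fmean (fun=> c) = c.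
Proof. by rewrite /fmean -mulr_suml q_sum1 mul1r. Qed.

Lemma fmean_ge0 x : (forall g, 0 <= x g) -> 0 <= fmean x.
Proof. by move=> x_ge0; apply: sumr_ge0 => g _; apply: mulr_ge0. Qed.

Lemma fmean_le x y : (forall g, x g <= y g) -> fmean x <= fmean y.
Proof. by move=> xy; apply: ler_sum => g _; apply: ler_wpM2l. Qed.

Lemma fmean_dist_le x y c : (forall g, `|x g - y g| <= c) ->
  `|fmean x - fmean y| <= c.
Proof.
move=> xyc; rewrite /fmean -sumrB; apply: le_trans (ler_norm_sum _ _ _) _.
rewrite -[c](fmean_cst c); apply: ler_sum => g _.
by rewrite -mulrBr normrM ger0_norm // ler_wpM2l.
Qed.

Lemma fmean_sqrB x c :
  fmean (fun g => (x g - c) ^+ 2) = fvar x + (fmean x - c) ^+ 2.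
Proof.
rewrite (_ : (fun g => _) = fun g => x g ^+ 2 + (-2 * c) * x g + c ^+ 2);
  last by apply/funext => g; ring.
by rewrite !fmeanD fmeanZ fmean_cst /fvar; ring.
Qed.

Lemma fvar_ge0 x : 0 <= fvar x.
Proof.
have := fmean_sqrB x (fmean x); rewrite subrr expr0n addr0 => <-.
by apply: fmean_ge0 => g; exact: sqr_ge0.
Qed.

Lemma ftail_ge0 x L eps : 0 <= ftail x L eps.
Proof. by apply: fmean_ge0 => g; exact: ler0n. Qed.

Lemma ftail_le_fmean_sqrB x L eps : 0 <= eps ->
  eps ^+ 2 * ftail x L eps <= fmean (fun g => (x g - L) ^+ 2).
Proof.
move=> eps_ge0; rewrite /ftail -fmeanZ; apply: fmean_le => g.
have [lt_eps|_] := ltP eps; last by rewrite mulr0 sqr_ge0.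
rewrite mulr1 -[(x g - L) ^+ 2]real_normK ?num_real //.
by rewrite ler_pXn2r ?nnegrE ?normr_ge0 // ltW.
Qed.

Lemma fmean_sqrB_le_ftail x L K eps : (forall g, `|x g - L| <= K) ->
  fmean (fun g => (x g - L) ^+ 2) <= eps ^+ 2 + K ^+ 2 * ftail x L eps.
Proof.
move=> xLK; rewrite /ftail -fmeanZ -[eps ^+ 2]fmean_cst -fmeanD.
apply: fmean_le => g /=; have K_ge0 : 0 <= K := le_trans (normr_ge0 _) (xLK g).
rewrite -[(x g - L) ^+ 2]real_normK ?num_real //.
have [_|le_eps] := ltP eps; rewrite ?mulr1 ?mulr0 ?addr0.
  by rewrite ler_wpDl ?sqr_ge0 // ler_pXn2r ?nnegrE ?normr_ge0.
by rewrite ler_pXn2r ?nnegrE ?normr_ge0 // (le_trans (normr_ge0 _) le_eps).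
Qed.

End FiniteMoments.

Section MomentConvergence.
Context {R : realType}.

Lemma tails_cvg0_iff (a : R -> nat -> R) (S : nat -> R) (K : R) : 0 <= K ->
  (forall eps n, 0 <= a eps n) ->
  (forall eps n, 0 < eps -> eps ^+ 2 * a eps n <= S n) ->
  (forall eps n, S n <= eps ^+ 2 + K * a eps n) ->
  (forall eps, 0 < eps -> a eps @ \oo --> 0) <-> S @ \oo --> 0.
Proof.
move=> K_ge0 a_ge0 markov S_le.
have S_ge0 n : 0 <= S n.
  by apply: le_trans (markov 1 n ltr01); rewrite mulr_ge0 ?sqr_ge0.
split=> [a0|S0 eps eps_gt0].
  apply/cvgr0Pnorm_le => e e_gt0.
  pose eps := Num.sqrt (e / 2).
  have eps2 : eps ^+ 2 = e / 2 by rewrite sqr_sqrtr // divr_ge0 // ltW.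
  have eps_gt0 : 0 < eps by rewrite sqrtr_gt0 divr_gt0.
  have /cvgr0Pnorm_le/(_ (e / 2 / (K + 1))) := a0 eps eps_gt0.
  rewrite divr_gt0 ?ltr_wpDl // ?divr_gt0 // => /(_ isT).
  apply: filterS => n; rewrite ger0_norm // ler_pdivlMr ?ltr_wpDl // => small.
  by rewrite ger0_norm //; apply: le_trans (S_le eps n) _; rewrite eps2; nra.
apply: (@squeeze_cvgr _ _ _ _ (cst 0) (fun n => eps ^-2 * S n)).
- by near=> n; rewrite a_ge0 /= ler_pdivlMl ?exprn_gt0 // markov.
- exact: cvg_cst.
- by rewrite -(mulr0 (eps ^-2)); apply: cvgMl_tmp.
Unshelve. all: by end_near.
Qed.

Lemma bias_variance_cvg0_iff (S m v : nat -> R) (L : R) :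
  (forall n, 0 <= v n) -> (forall n, S n = v n + (m n - L) ^+ 2) ->
  S @ \oo --> 0 <-> m @ \oo --> L /\ v @ \oo --> 0.
Proof.
move=> v_ge0 SE; split=> [S0|[mL v0]].
  have bias0 : (fun n => (m n - L) ^+ 2) @ \oo --> 0.
    apply: (@squeeze_cvgr _ _ _ _ (cst 0) S) => //; last exact: cvg_cst.
    by near=> n; rewrite sqr_ge0 SE lerDr v_ge0.
  split.
    apply/subr_cvg0/cvgr0Pnorm_le => e e_gt0.
    move/cvgr0Pnorm_le/(_ (e ^+ 2) (exprn_gt0 2 e_gt0)): bias0; apply: filterS => n.
    rewrite ger0_norm ?sqr_ge0 // -real_normK ?num_real //.
    by rewrite ler_pXn2r ?nnegrE ?normr_ge0 // ltW.
  apply: (@squeeze_cvgr _ _ _ _ (cst 0) S) => //; last exact: cvg_cst.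
  by near=> n; rewrite v_ge0 SE lerDl sqr_ge0.
have mL0 : (fun n => m n - L) @ \oo --> 0 by apply/subr_cvg0.
suff : (v + (fun n => m n - L) \* (fun n => m n - L)) @ \oo --> (0 + 0 * 0 : R).
  by rewrite mulr0 addr0 (eq_cvg _ _ SE).
by apply: cvgD => //; exact: cvgM.
Unshelve. all: by end_near.
Qed.

Lemma ftail_cvg0_iff {G : nat -> finType} {q x : forall n, G n -> R} {L K : R} :
  (forall n g, 0 <= q n g) -> (forall n, \sum_g q n g = 1) ->
  (forall n g, `|x n g - L| <= K) ->
  (forall eps, 0 < eps -> (fun n => ftail (q n) (x n) L eps) @ \oo --> 0) <->
  (fun n => fmean (q n) (x n)) @ \oo --> L /\ (fun n => fvar (q n) (x n)) @ \oo --> 0.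
Proof.
move=> q_ge0 q_sum1 xLK.
rewrite (@tails_cvg0_iff _ (fun n => fmean (q n) (fun g => (x n g - L) ^+ 2)) (K ^+ 2)).
- by apply: bias_variance_cvg0_iff => n; [exact: fvar_ge0|exact: fmean_sqrB].
- exact: sqr_ge0.
- by move=> eps n; exact: ftail_ge0.
- by move=> eps n eps_gt0; apply: ftail_le_fmean_sqrB => //; exact: ltW.
- by move=> eps n; exact: fmean_sqrB_le_ftail.
Qed.

Lemma cvg_iff_sub_cvg0 {u v : nat -> R} {l : R} :
  (fun n => u n - v n) @ \oo --> 0 -> u @ \oo --> l <-> v @ \oo --> l.
Proof.
move=> uv0; split=> [ul|vl].
  suff -> : v = u - (fun n => u n - v n) by rewrite -[l]subr0; exact: cvgB.
  by apply/funext => n /=; rewrite opprB addrC subrK.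
suff -> : u = v + (fun n => u n - v n) by rewrite -[l]addr0; exact: cvgD.
by apply/funext => n /=; rewrite addrC subrK.
Qed.

Lemma norm_le_inv_subr1_cvg0 {a u : nat -> R} {N : nat} : u @ \oo --> +oo ->
  (forall n, (N <= n)%N -> `|a n| <= (u n - 1)^-1) -> a @ \oo --> 0.
Proof.
move=> /cvgryPge u_ge a_le.
have u1_oo : (fun n => u n - 1) @ \oo --> +oo.
  by apply/cvgryPge => A; apply: filterS (u_ge (A + 1)) => n; rewrite lerBrDr.
have /cvgr0Pnorm_le inv0 : (fun n => (u n - 1)^-1) @ \oo --> 0.
  by rewrite gtr0_cvgV0 //; move/cvgryPgt: u1_oo; apply.
apply/cvgr0Pnorm_le => e /inv0; apply: filterS2 (nbhs_infty_ge N) => n /a_le an small.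
exact: le_trans an (le_trans (ler_norm _) small).
Qed.

Lemma cvg_EFin_eventually {f : nat -> \bar R} {u : nat -> R} {N : nat} (l : R) :
  (forall n, (N <= n)%N -> f n = (u n)%:E) -> f @ \oo --> l%:E <-> u @ \oo --> l.
Proof.
move=> fu; have fine_fu : \forall n \near \oo, fine (f n) = u n.
  by apply: filterS (nbhs_infty_ge N) => n /fu ->.
rewrite fine_cvgP; split=> [[_ fl]|ul].
  exact: cvg_trans (near_eq_cvg fine_fu) fl.
split; first by apply: filterS (nbhs_infty_ge N) => n /fu ->.
by apply: cvg_trans (near_eq_cvg _) ul; apply: filterS fine_fu => n /= ->.
Qed.

End MomentConvergence.

Lemma sum_offdiag {R : comPzRingType} {V : finType} (a b : V -> R) :
  \sum_(kl : V * V | kl.1 != kl.2) a kl.1 * b kl.2 =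
  (\sum_k a k) * (\sum_l b l) - \sum_k a k * b k.
Proof.
rewrite -(pair_big_dep xpredT (fun k l => k != l) (fun k l => a k * b l)) /=.
rewrite big_distrl -sumrB; apply: eq_bigr => k _.
rewrite big_distrr [in RHS](bigD1 k) //= addrAC subrr add0r.
by apply: eq_bigl => l; rewrite eq_sym.
Qed.

Lemma sumr_indicator_card {R : pzSemiRingType} {V : finType} (a : pred V) :
  \sum_k ((a k)%:R : R) = #|a|%:R.
Proof.
rewrite -sum1_card natr_sum [RHS]big_mkcond.
by apply: eq_bigr => k _; rewrite unfold_in; case: (a k).
Qed.

Lemma without_replacement_sqr_gap {R : realFieldType} (m N : R) :
  0 <= m <= N -> 1 < N ->
  `|m * (m - 1) / (N * (N - 1)) - (m / N) ^+ 2| <= (N - 1)^-1.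
Proof.
move=> /andP[m_ge0 mN] N_gt1.
have N_gt0 : 0 < N by apply: lt_trans N_gt1.
have N1_gt0 : 0 < N - 1 by rewrite subr_gt0.
have x01 : 0 <= m / N <= 1 by rewrite divr_ge0 ?(ltW N_gt0) //= ler_pdivrMr // mul1r.
rewrite (_ : _ - _ = (m / N) * (m / N - 1) / (N - 1)); last first.
  by field; rewrite ?gt_eqF // ?subr_gt0.
move: x01; set x := m / N => /andP[x_ge0 x_le1].
have inv_ge0 : 0 <= (N - 1)^-1 by rewrite invr_ge0 ltW.
rewrite normrM [`|_^-1|]ger0_norm //; apply: ler_piMl => //.
by rewrite ler_norml; apply/andP; split; nra.
Qed.

Section FiniteLaw.
Context {dT : measure_display} {T : measurableType dT} {R : realType}.
Context (P : probability T R) {G : finType} (f : T -> G).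

Definition law (g : G) : R := fine (P [set w | f w = g]).

Lemma law_ge0 g : 0 <= law g.
Proof. exact: fine_ge0. Qed.

Hypothesis measurable_fiber : forall g, measurable [set w | f w = g].

Let preimage_bigcup (Q : pred G) :
  [set w | Q (f w)] = \bigcup_(g in [set` Q]) [set w | f w = g].
Proof. by apply/seteqP; split=> [w Qfw|w [g Qg /= ->]]; [exists (f w)|]. Qed.

Lemma measurable_preimage (Q : pred G) : measurable [set w | Q (f w)].
Proof. by rewrite preimage_bigcup; apply: fin_bigcup_measurable => // g _. Qed.

Lemma law_fiber g : P [set w | f w = g] = (law g)%:E.
Proof. by rewrite fineK // fin_num_measure. Qed.

Lemma probability_preimage (Q : pred G) :
  P [set w | Q (f w)] = (\sum_(g | Q g) law g)%:E.
Proof.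
rewrite preimage_bigcup measure_fin_bigcup //; last first.
  by move=> g h _ _ [w [/= -> ->]].
rewrite -(bigfs _ (index_enum_uniq G)); last by move=> g _; rewrite mem_index_enum.
by rewrite -sumEFin; apply: eq_bigr => g _; exact: law_fiber.
Qed.

Lemma law_sum1 : \sum_g law g = 1.
Proof.
apply: EFin_inj; rewrite -(probability_preimage xpredT) -(probability_setT P).
by congr (P _); apply/seteqP.
Qed.

End FiniteLaw.

Lemma covariance_indic {dT : measure_display} {T : measurableType dT}
    {R : realType} (P : probability T R) (A B : set T) :
  measurable A -> measurable B ->
  covariance P (\1_A : T -> R) (\1_B : T -> R) = (P (A `&` B) - P A * P B)%E.
Proof.
move=> mA mB; have mAB := measurableI _ _ mA mB.
have indic_L1 C : measurable C -> (\1_C : T -> R) \in Lfun P 1.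
  by move=> mC; apply/Lfun1_integrable; exact: integrable_indic.
have indicM : ((\1_A : T -> R) * \1_B)%R = \1_(A `&` B).
  by apply/funext => w; rewrite indicI.
by rewrite covarianceE ?indicM ?indic_L1 // !expectation_indic.
Qed.

Section DegreeFractions.
Context {R : realType} {Omega : Type} {V : finType} (chi : Omega -> V -> V -> bool).
Variable d : nat.

(* The probability that two distinct nodes drawn uniformly both have degree d. *)
Definition Pfrac_pair (w : Omega) : R :=
  (Ncount chi d w)%:R * ((Ncount chi d w)%:R - 1) / (#|V|%:R * (#|V|%:R - 1)).

Lemma Ncount_le_card w : (Ncount chi d w <= #|V|)%N.
Proof. exact: max_card. Qed.

Lemma Pfrac_ge0_le1 w : 0 <= Pfrac (R := R) chi d w <= 1.
Proof.
rewrite /Pfrac divr_ge0 //=; have [->|V_gt0] := posnP #|V|; first by rewrite invr0 mulr0.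
by rewrite ler_pdivrMr ?ltr0n // mul1r ler_nat Ncount_le_card.
Qed.

Lemma Pfrac_dist_le (L : R) w : `|Pfrac chi d w - L| <= 1 + `|L|.
Proof.
have /andP[Pfrac_ge0 Pfrac_le1] := Pfrac_ge0_le1 w.
by apply: le_trans (ler_normB _ _) _; rewrite lerD2r ger0_norm.
Qed.

Lemma Pfrac_pair_sqr_gap w : (2 <= #|V|)%N ->
  `|Pfrac_pair w - Pfrac chi d w ^+ 2| <= (#|V|%:R - 1)^-1.
Proof.
move=> V_ge2; apply: without_replacement_sqr_gap; last by rewrite ltr1n.
by rewrite ler0n ler_nat Ncount_le_card.
Qed.

End DegreeFractions.

Section RandomGraph.
Context {dT : measure_display} {T : measurableType dT} {R : realType}.
Context (P : probability T R) {V : finType} (chi : T -> V -> V -> bool).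

(* The graph as a random element of a finite type, so that its law is a
   finite probability vector. *)
Definition graph_of (w : T) : {ffun V * V -> bool} := [ffun kl => chi w kl.1 kl.2].
Definition adjacency (g : {ffun V * V -> bool}) (k l : V) : bool := g (k, l).

Lemma adjacency_inj : injective adjacency.
Proof. by move=> g h gh; apply/ffunP => -[k l]; rewrite -/(adjacency g k l) gh. Qed.

Lemma adjacency_graph_of w : chi w = adjacency (graph_of w).
Proof. by apply/funext => k; apply/funext => l; rewrite /adjacency ffunE. Qed.

Lemma degree_graph_of w k : degree chi w k = degree adjacency (graph_of w) k.
Proof. by rewrite /degree adjacency_graph_of. Qed.

Lemma Pfrac_graph_of d w : Pfrac chi d w = Pfrac adjacency d (graph_of w) :> R.
Proof. by rewrite /Pfrac /Ncount /degree adjacency_graph_of. Qed.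

Lemma card_degree_eq d g :
  #|[pred k | degree adjacency g k == d]| = Ncount adjacency d g.
Proof.
by apply: eq_card => k; rewrite inE; apply/idP/idP => [/mem_set|/set_mem].
Qed.

Lemma graph_of_fiber g : [set w | graph_of w = g] = [set w | chi w = adjacency g].
Proof.
apply/seteqP; split=> w /=; rewrite adjacency_graph_of; first by move->.
exact: adjacency_inj.
Qed.

Hypothesis measurable_edge : forall k l, measurable [set w | chi w k l].

Lemma measurable_graph_of g : measurable [set w | graph_of w = g].
Proof.
have -> : [set w | graph_of w = g] =
    \bigcap_(kl in setT) [set w | chi w kl.1 kl.2 = g kl].
  apply/seteqP; split=> [w <- kl _|w edges]; first by rewrite ffunE.
  by apply/ffunP => kl; rewrite ffunE; exact: edges.
apply: fin_bigcap_measurable => // -[k l] _ /=.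
case: (g (k, l)); first exact: measurable_edge.
rewrite (_ : [set w | _] = ~` [set w | chi w k l]); first exact: measurableC.
by apply/seteqP; split=> w /=; [move=> -> | move/negP/negbTE].
Qed.

Lemma prob_Pfrac_tail d L eps :
  P [set w | eps < `|Pfrac chi d w - L|] =
  (ftail (law P graph_of) (Pfrac adjacency d) L eps)%:E.
Proof.
under eq_set do rewrite Pfrac_graph_of.
rewrite (probability_preimage _ _ measurable_graph_of
  (fun g => eps < `|Pfrac adjacency d g - L|)).
rewrite /ftail /fmean big_mkcond; congr EFin; apply: eq_bigr => g _.
by case: ifP; rewrite ?mulr1 ?mulr0.
Qed.

Variables nu mu : T -> V.
Hypothesis measurable_nu : forall k, measurable [set w | nu w = k].
Hypothesis measurable_mu : forall l, measurable [set w | mu w = l].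

Definition pair_of w : V * V := (nu w, mu w).
Definition graph_pair_of w := (graph_of w, pair_of w).

Lemma pair_of_fiber kl :
  [set w | pair_of w = kl] = [set w | nu w = kl.1 /\ mu w = kl.2].
Proof.
by case: kl => k l; apply/seteqP; split=> w; rewrite /pair_of /= => -[-> ->].
Qed.

Lemma measurable_pair_of kl : measurable [set w | pair_of w = kl].
Proof.
by rewrite pair_of_fiber; exact: (measurableI _ _ (measurable_nu _) (measurable_mu _)).
Qed.

Lemma graph_pair_of_fiber g kl : [set w | graph_pair_of w = (g, kl)] =
  [set w | graph_of w = g] `&` [set w | pair_of w = kl].
Proof. by apply/seteqP; split=> w; rewrite /graph_pair_of /= => -[-> ->]. Qed.

Lemma measurable_graph_pair_of x : measurable [set w | graph_pair_of w = x].
Proof.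
case: x => g kl; rewrite graph_pair_of_fiber.
by apply: measurableI; [exact: measurable_graph_of|exact: measurable_pair_of].
Qed.

Lemma measurable_graph_pair_preimage (Q : {ffun V * V -> bool} -> V -> V -> bool) :
  measurable [set w | Q (graph_of w) (nu w) (mu w)].
Proof.
exact: (measurable_preimage _ measurable_graph_pair_of (fun x => Q x.1 x.2.1 x.2.2)).
Qed.

(* The [&& true] padding gives the right-hand sides the shape
   [a (graph_of w) (nu w) && b (graph_of w) (mu w)] expected by
   [prob_graph_pair_preds]. *)
Lemma degree_nu_preimage d : [set w | degree chi w (nu w) = d] =
  [set w | (degree adjacency (graph_of w) (nu w) == d) && true].
Proof. by apply/seteqP; split=> w /=; rewrite degree_graph_of andbT; move/eqP. Qed.

Lemma degree_mu_preimage d : [set w | degree chi w (mu w) = d] =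
  [set w | true && (degree adjacency (graph_of w) (mu w) == d)].
Proof. by apply/seteqP; split=> w /=; rewrite degree_graph_of; move/eqP. Qed.

Hypothesis indep : indep_pair_graph P chi nu mu.

Lemma law_graph_pair_of g kl :
  law P graph_pair_of (g, kl) = law P graph_of g * law P pair_of kl.
Proof.
rewrite /law graph_pair_of_fiber graph_of_fiber pair_of_fiber indep.
rewrite -graph_of_fiber -pair_of_fiber fineM // fin_num_measure //.
  exact: measurable_graph_of.
exact: measurable_pair_of.
Qed.

Lemma prob_graph_pair (Q : {ffun V * V -> bool} -> V -> V -> bool) :
  P [set w | Q (graph_of w) (nu w) (mu w)] =
  (\sum_g law P graph_of g * \sum_(kl | Q g kl.1 kl.2) law P pair_of kl)%:E.
Proof.
rewrite (probability_preimage _ _ measurable_graph_pair_of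
  (fun x => Q x.1 x.2.1 x.2.2)); congr EFin.
under [RHS]eq_bigr do rewrite mulr_sumr.
by rewrite pair_big_dep; apply: eq_big => -[g kl] //= _; rewrite law_graph_pair_of.
Qed.

Hypothesis V_ge2 : (2 <= #|V|)%N.
Hypothesis uniform : forall k l : V, k != l ->
  P [set w | nu w = k /\ mu w = l] = ((#|V|%:R * (#|V|%:R - 1))^-1 : R)%:E.

Let card_neq0 : #|V|%:R != 0 :> R.
Proof. by rewrite pnatr_eq0 -lt0n (leq_trans _ V_ge2). Qed.

Let card_sub1_neq0 : #|V|%:R - 1 != 0 :> R.
Proof. by rewrite subr_eq0 pnatr_eq1 gtn_eqF. Qed.

(* The hypothesis [uniform] only covers k != l; the diagonal gets no mass
   because the off-diagonal mass is already 1. *)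
Lemma law_pair_of kl :
  law P pair_of kl = (kl.1 != kl.2)%:R / (#|V|%:R * (#|V|%:R - 1)).
Proof.
pose u : R := (#|V|%:R * (#|V|%:R - 1))^-1.
have law_offdiag kl' : kl'.1 != kl'.2 -> law P pair_of kl' = 1 * u.
  by move=> neq; rewrite /law pair_of_fiber uniform // mul1r.
have offdiag_mass : \sum_(kl' | kl'.1 != kl'.2) law P pair_of kl' = 1.
  rewrite (eq_bigr _ law_offdiag).
  have := sum_offdiag (fun=> 1 : R) (fun=> u); rewrite /= => ->.
  by rewrite !sumr_const /u -/#|V|; field; rewrite card_neq0 card_sub1_neq0.
have diag_mass : \sum_(kl' | kl'.1 == kl'.2) law P pair_of kl' = 0.
  have := law_sum1 P _ measurable_pair_of.
  by rewrite (bigID (fun kl' => kl'.1 == kl'.2)) /= offdiag_mass => ?; lra.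
case: (eqVneq kl.1 kl.2) => [eq_kl|neq_kl]; last by rewrite law_offdiag // mul1r.
rewrite mul0r; apply: (psumr_eq0P _ diag_mass) => [kl' _|]; last exact/eqP.
exact: law_ge0.
Qed.

Lemma prob_graph_pair_preds (a b : {ffun V * V -> bool} -> pred V) :
  P [set w | a (graph_of w) (nu w) && b (graph_of w) (mu w)] =
  (fmean (law P graph_of) (fun g => (#|a g|%:R * #|b g|%:R - #|predI (a g) (b g)|%:R)
                                     / (#|V|%:R * (#|V|%:R - 1))))%:E.
Proof.
rewrite (prob_graph_pair (fun g k l => a g k && b g l)); congr EFin.
apply: eq_bigr => g _; congr (_ * _).
set D : R := #|V|%:R * (#|V|%:R - 1).
transitivity (\sum_(kl : V * V | kl.1 != kl.2) (a g kl.1)%:R * ((b g kl.2)%:R / D)).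
  rewrite big_mkcond [RHS]big_mkcond; apply: eq_bigr => -[k l] _ /=.
  rewrite law_pair_of /=.
  by case: (a g k); case: (b g l); case: (k != l); rewrite ?mul0r ?mul1r.
have := sum_offdiag (fun k => (a g k)%:R : R) (fun l => (b g l)%:R / D).
rewrite /= => ->; rewrite -mulr_suml.
under [X in _ - X]eq_bigr do rewrite mulrA -natrM mulnb.
by rewrite -mulr_suml !sumr_indicator_card mulrA -mulrBl.
Qed.

Lemma prob_degree_nu d : P [set w | degree chi w (nu w) = d] =
  (fmean (law P graph_of) (Pfrac adjacency d))%:E.
Proof.
rewrite degree_nu_preimage.
rewrite (prob_graph_pair_preds (fun g => [pred k | degree adjacency g k == d]) (fun=> predT)).
congr EFin; apply: eq_bigr => g _ /=; congr (_ * _).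
have -> : #|predI [pred k | degree adjacency g k == d] predT| = Ncount adjacency d g.
  by rewrite -card_degree_eq; apply: eq_card => k; rewrite !inE andbT.
by rewrite card_degree_eq /Pfrac; field; rewrite card_neq0 card_sub1_neq0.
Qed.

Lemma prob_degree_mu d : P [set w | degree chi w (mu w) = d] =
  (fmean (law P graph_of) (Pfrac adjacency d))%:E.
Proof.
rewrite degree_mu_preimage.
rewrite (prob_graph_pair_preds (fun=> predT) (fun g => [pred k | degree adjacency g k == d])).
congr EFin; apply: eq_bigr => g _ /=; congr (_ * _).
have -> : #|predI predT [pred k | degree adjacency g k == d]| = Ncount adjacency d g.
  by rewrite -card_degree_eq; apply: eq_card => k; rewrite !inE.
by rewrite /Pfrac; field; rewrite card_neq0 card_sub1_neq0.
Qed.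

Lemma prob_degree_nu_mu d :
  P ([set w | degree chi w (nu w) = d] `&` [set w | degree chi w (mu w) = d]) =
  (fmean (law P graph_of) (Pfrac_pair adjacency d))%:E.
Proof.
pose deg_d g := [pred k | degree adjacency g k == d].
rewrite (_ : _ `&` _ = [set w | deg_d (graph_of w) (nu w) && deg_d (graph_of w) (mu w)]).
  rewrite (prob_graph_pair_preds deg_d deg_d).
  congr EFin; apply: eq_bigr => g _; congr (_ * _).
  have -> : #|predI (deg_d g) (deg_d g)| = Ncount adjacency d g.
    by rewrite -card_degree_eq; apply: eq_card => k; rewrite !inE andbb.
  by rewrite /deg_d card_degree_eq /Pfrac_pair; congr (_ / _); ring.
apply/seteqP; split=> w /=; rewrite !degree_graph_of; first by case=> -> ->; rewrite eqxx.
by case/andP => /eqP -> /eqP ->.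
Qed.

Lemma covariance_degree d :
  covariance P (\1_[set w | degree chi w (nu w) = d] : T -> R)
               (\1_[set w | degree chi w (mu w) = d] : T -> R) =
  (fmean (law P graph_of) (Pfrac_pair adjacency d)
   - fmean (law P graph_of) (Pfrac adjacency d) ^+ 2)%:E.
Proof.
rewrite covariance_indic; last 2 first.
- rewrite degree_nu_preimage.
  exact: (measurable_graph_pair_preimage (fun g k _ => (degree adjacency g k == d) && true)).
- rewrite degree_mu_preimage.
  exact: (measurable_graph_pair_preimage (fun g _ l => true && (degree adjacency g l == d))).
by rewrite prob_degree_nu_mu prob_degree_nu prob_degree_mu -EFinM -EFinB expr2.
Qed.

Lemma covariance_variance_gap d :
  `|(fmean (law P graph_of) (Pfrac_pair adjacency d)
     - fmean (law P graph_of) (Pfrac adjacency d) ^+ 2)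
    - fvar (law P graph_of) (Pfrac adjacency d)| <= (#|V|%:R - 1)^-1.
Proof.
rewrite /fvar opprB addrA subrK.
apply: fmean_dist_le => [g||g]; [exact: law_ge0|exact: (law_sum1 P _ measurable_graph_of)|].
exact: Pfrac_pair_sqr_gap.
Qed.

End RandomGraph.

Theorem proposition4 (dO : measure_display) (Omega : measurableType dO)
  (R : realType) (P : probability Omega R)
  (V : nat -> finType)
  (chi : forall n, Omega -> V n -> V n -> bool)
  (nu mu : forall n, Omega -> V n)
  (hV2 : forall n, (2 <= n)%N -> (2 <= #|V n|)%N)
  (hVinf : (fun n => (#|V n|%:R : R)) @ \oo --> +oo)
  (hchi_meas : forall n k l, measurable [set w | chi n w k l])
  (hnu_meas : forall n k, measurable [set w | nu n w = k])
  (hmu_meas : forall n l, measurable [set w | mu n w = l])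
  (hunif : forall n, (2 <= n)%N -> forall k l : V n, k != l ->
     P [set w | nu n w = k /\ mu n w = l] =
       ((#|V n|%:R * (#|V n|%:R - 1))^-1 : R)%:E)
  (hindep : forall n, (2 <= n)%N -> indep_pair_graph P (chi n) (nu n) (mu n))
  (d : nat) (L : R) :
  cvg_in_prob P (fun n => Pfrac (chi n) d) L <->
  ((fun n => P [set w | degree (chi n) w (nu n w) = d]) @ \oo --> L%:E
   /\ (fun n => covariance P
         (\1_[set w | degree (chi n) w (nu n w) = d] : Omega -> R)
         (\1_[set w | degree (chi n) w (mu n w) = d] : Omega -> R)) @ \oo --> 0%E).
Proof.
pose q n := law P (graph_of (chi n)); pose x n := Pfrac (R := R) (@adjacency (V n)) d.
have tailsE eps := cvg_EFin_eventually (N := 0) 0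
  (fun n _ => prob_Pfrac_tail P (chi n) (hchi_meas n) d L eps).
have meanE := cvg_EFin_eventually L (fun n n2 =>
  prob_degree_nu P (chi n) (hchi_meas n) (nu n) (mu n) (hnu_meas n) (hmu_meas n)
    (hindep n n2) (hV2 n n2) (hunif n n2) d).
have covE := cvg_EFin_eventually 0 (fun n n2 =>
  covariance_degree P (chi n) (hchi_meas n) (nu n) (mu n) (hnu_meas n) (hmu_meas n)
    (hindep n n2) (hV2 n n2) (hunif n n2) d).
have gap := norm_le_inv_subr1_cvg0 hVinf (fun n n2 =>
  covariance_variance_gap P (chi n) (hchi_meas n) (hV2 n n2) d).
transitivity (forall eps, 0 < eps -> (fun n => ftail (q n) (x n) L eps) @ \oo --> 0).
  by split=> tails eps /tails /tailsE.
rewrite (ftail_cvg0_iff (fun n => law_ge0 P _)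
  (fun n => law_sum1 P _ (measurable_graph_of _ (hchi_meas n)))
  (fun n => Pfrac_dist_le _ d L)).
by split=> [[/meanE ? /(cvg_iff_sub_cvg0 gap)/covE ?]|[/meanE ? /covE/(cvg_iff_sub_cvg0 gap) ?]].
Qed.
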